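(* Let $k\geq 2$ be an integer and $G=BS(1,k)=\langle a,t\mid tat^{-1}=a^k\rangle$. With respect to the generating set $\{a,t\}$, the conjugacy growth rate of $G$ equals the standard growth rate of $G$.
   Context: For $g\in G$, $|g|$ is the word length with respect to $\{a,t\}$; the length of a conjugacy class $[g]$ is $|[g]|=\min\{|h|: h\sim g\}$. Let $s(n)$ be the number of elements of $G$ of length $n$ and $c(n)$ the number of conjugacy classes of length $n$. The standard growth rate is $\limsup_n s(n)^{1/n}$ (equivalently the reciprocal of the radius of convergence of $\sum s(n)z^n$), and the conjugacy growth rate is $\limsup_n c(n)^{1/n}$ (the reciprocal of the radius of convergence of $\sum c(n)z^n$). *)

From HB Require Import structures.
From mathcomp Require Import all_boot all_order all_algebra.
From mathcomp Require Import all_classical all_reals all_analysis.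
Set Implicit Arguments. Unset Strict Implicit. Unset Printing Implicit Defensive.
Import Order.TTheory GRing.Theory Num.Theory.
Local Open Scope ring_scope.

(* Concrete model of BS(1,k) = < a, t | t a t^-1 = a^k > as the group of
   affine maps x |-> k^n x + b of Q, b in Z[1/k].  The pair (n, b) encodes
   this map; multiplication is composition:  (g1 * g2)(x) = g1 (g2 x).
   a = (0,1) : x |-> x + 1,   t = (1,0) : x |-> k x.
   Group elements are exactly the values of [bs_eval] on words. *)
Definition bs_elt := (int * rat)%type.

Definition bs_mul (k : nat) (g1 g2 : bs_elt) : bs_elt :=
  (g1.1 + g2.1, (k%:R : rat) ^ g1.1 * g2.2 + g1.2).

Definition bs_one : bs_elt := (0, 0).

(* letters of the symmetric generating set {a, a^-1, t, t^-1}: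
   (is_t, is_inverse) *)
Definition letter := (bool * bool)%type.

Definition bs_letter (l : letter) : bs_elt :=
  match l with
  | (false, false) => (0, 1)
  | (false, true)  => (0, -1)
  | (true, false)  => (1, 0)
  | (true, true)   => (-1, 0)
  end.

Definition bs_eval (k : nat) (w : seq letter) : bs_elt :=
  foldr (fun l g => bs_mul k (bs_letter l) g) bs_one w.

Definition words (n : nat) : seq (seq letter) :=
  [seq tval t | t <- enum {: n.-tuple letter}].

Definition reach (k n : nat) (g : bs_elt) : bool :=
  g \in [seq bs_eval k w | w <- words n].

Definition has_len (k : nat) (g : bs_elt) (n : nat) : bool :=
  reach k n g && all (fun m => ~~ reach k m g) (iota 0 n).

Definition sph (k n : nat) : nat :=
  size (undup [seq g <- [seq bs_eval k w | w <- words n] | has_len k g n]).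

(* conjugacy in G (conjugator ranges over group elements = word values):
   h = x g x^-1  <->  x g = h x *)
Definition conj_bs (k : nat) (g h : bs_elt) : Prop :=
  exists w : seq letter, bs_mul k (bs_eval k w) g = bs_mul k h (bs_eval k w).

Definition cyc_min (k n : nat) : seq bs_elt :=
  [seq g <- undup [seq g <- [seq bs_eval k w | w <- words n] | has_len k g n]
   | `[< ~ exists h, exists2 m, (m < n)%N & has_len k h m /\ conj_bs k g h >]].

Fixpoint class_reps (k : nat) (l : seq bs_elt) : seq bs_elt :=
  match l with
  | [::] => [::]
  | g :: l' =>
      if `[< exists2 h, h \in l' & conj_bs k g h >] then class_reps k l'
      else g :: class_reps k l'
  end.

Definition conj_sph (k n : nat) : nat := size (class_reps k (cyc_min k n)).

Definition growth_rate (R : realType) (u : nat -> nat) : \bar R :=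
  limn_esup (fun n => (powR (u n)%:R (n%:R)^-1)%:E).

(* Every conjugacy class of length n contains an element of length n, so
   c(n) <= s(n).  Conversely, an element g of length n has the form
   (e, k^-p V) with |e| <= n and V = sum_i c_i k^i an integer whose digits
   satisfy sum_i |c_i| + #c <= n + 1.  The element h = a^V t^M with
   M = #c + O(log n) has length at most n + O(log n) and 2|V| < k^M - 1.
   Conjugating h by an element whose t-exponent is divisible by M changes V
   by a multiple of k^M - 1 in Z[1/k], so V is determined by a minimal
   representative of the class of h together with the t-exponent of a
   conjugator modulo M.  Hence s(n) <= poly(n) * sum_{j <= n + O(log n)} c(j);
   as c(j) >= 1, the polynomial factor and the logarithmic shift do not change
   the exponential growth rate. *)

From HB Require Import structures.
From mathcomp Require Import all_boot all_order all_algebra.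
From mathcomp Require Import all_classical all_reals all_analysis.
From mathcomp Require Import ring lra zify.
Set Implicit Arguments. Unset Strict Implicit. Unset Printing Implicit Defensive.
Import Order.TTheory GRing.Theory Num.Theory.
Local Open Scope ring_scope.

Section Group.
Variable k : nat.
Hypothesis k_gt0 : (0 < k)%N.
Local Notation kq := (k%:R : rat).

Lemma kq_neq0 : kq != 0.
Proof. by rewrite pnatr_eq0 -lt0n. Qed.

Lemma bs_mulA : associative (bs_mul k).
Proof.
move=> [n1 b1] [n2 b2] [n3 b3]; rewrite /bs_mul /=.
by rewrite addrA expfzDr ?kq_neq0 // mulrDr mulrA addrA.
Qed.

Lemma bs_mul1g : left_id bs_one (bs_mul k).
Proof. by case=> n b; rewrite /bs_mul /= add0r expr0z mul1r addr0. Qed.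

Lemma bs_mulg1 : right_id bs_one (bs_mul k).
Proof. by case=> n b; rewrite /bs_mul /= addr0 mulr0 add0r. Qed.

Lemma bs_eval_cat w1 w2 :
  bs_eval k (w1 ++ w2) = bs_mul k (bs_eval k w1) (bs_eval k w2).
Proof. by elim: w1 => [|l w1 IH] /=; rewrite ?bs_mul1g // IH bs_mulA. Qed.

Definition inv_letter (l : letter) : letter := (l.1, ~~ l.2).
Definition inv_word (w : seq letter) : seq letter := rev (map inv_letter w).

Lemma inv_wordK : involutive inv_word.
Proof.
move=> w; rewrite /inv_word map_rev revK -map_comp -[RHS]map_id.
by apply: eq_map => -[a b]; rewrite /inv_letter /= negbK.
Qed.

Lemma bs_letterV l : bs_mul k (bs_letter l) (bs_letter (inv_letter l)) = bs_one.
Proof.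
by case: l => [[] []]; rewrite /bs_mul /bs_one /=;
  congr pair; rewrite ?addrN ?addNr ?mulr0 ?add0r ?expr0z ?mul1r ?addrN ?addNr.
Qed.

Lemma bs_eval_invr w : bs_mul k (bs_eval k w) (bs_eval k (inv_word w)) = bs_one.
Proof.
elim: w => [|l w IH] /=; first by rewrite bs_mulg1.
rewrite /inv_word map_cons rev_cons -cats1 -/(inv_word w) bs_eval_cat.
by rewrite !bs_mulA bs_mulg1 -(bs_mulA (bs_letter l)) IH bs_mulg1 bs_letterV.
Qed.

Lemma bs_eval_invl w : bs_mul k (bs_eval k (inv_word w)) (bs_eval k w) = bs_one.
Proof. by rewrite -{2}(inv_wordK w) bs_eval_invr. Qed.

Lemma conj_bs_refl g : conj_bs k g g.
Proof. by exists [::]; rewrite /= bs_mul1g bs_mulg1. Qed.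

Lemma conj_bs_trans g h f : conj_bs k g h -> conj_bs k h f -> conj_bs k g f.
Proof.
move=> [w1 H1] [w2 H2]; exists (w2 ++ w1).
by rewrite bs_eval_cat -bs_mulA H1 bs_mulA H2 -bs_mulA.
Qed.

Lemma conj_bs_fst g h : conj_bs k g h -> g.1 = h.1.
Proof. by case=> w /(congr1 fst) /=; rewrite [RHS]addrC => /addrI. Qed.

Lemma bs_eval_inv_word_fst w : (bs_eval k (inv_word w)).1 = - (bs_eval k w).1.
Proof. by have /(congr1 fst) /= /eqP := bs_eval_invl w; rewrite addr_eq0 => /eqP. Qed.

Lemma conj_common_target w1 w2 g1 g2 h :
  bs_mul k (bs_eval k w1) g1 = bs_mul k h (bs_eval k w1) ->
  bs_mul k (bs_eval k w2) g2 = bs_mul k h (bs_eval k w2) ->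
  let y := bs_eval k (inv_word w2 ++ w1) in bs_mul k y g1 = bs_mul k g2 y.
Proof.
move=> H1 H2 y; rewrite /y bs_eval_cat -bs_mulA H1 !bs_mulA; congr (bs_mul k _ _).
set x2 := bs_eval k w2; set x2' := bs_eval k (inv_word w2).
have -> : bs_mul k x2' h = bs_mul k (bs_mul k (bs_mul k x2' h) x2) x2'.
  by rewrite -bs_mulA bs_eval_invr bs_mulg1.
by rewrite -(bs_mulA x2') -H2 bs_mulA bs_eval_invl bs_mul1g.
Qed.

End Group.

Section Words.
Variable k : nat.
Hypothesis k_gt0 : (0 < k)%N.

Lemma mem_words n w : (w \in words n) = (size w == n).
Proof.
apply/mapP/eqP => [[t _ ->]|Hs]; first exact: size_tuple.
by exists (Tuple (introT eqP Hs)); rewrite ?mem_enum.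
Qed.

Lemma reachP n g :
  reflect (exists2 w, size w = n & bs_eval k w = g) (reach k n g).
Proof.
apply: (iffP mapP) => [[w]|[w Hs <-]]; last by exists w; rewrite ?mem_words ?Hs.
by rewrite mem_words => /eqP Hs ->; exists w.
Qed.

Lemma has_len_reach n g : has_len k g n -> reach k n g.
Proof. by case/andP. Qed.

Lemma reach_has_len n g : reach k n g -> exists2 j, (j <= n)%N & has_len k g j.
Proof.
move=> Hn; have ex : exists j, reach k j g by exists n.
case: (ex_minnP ex) => j Hj Hmin; exists j; first exact: Hmin.
rewrite /has_len Hj; apply/allP => m; rewrite mem_iota add0n => /andP[_ Hm].
by apply/negP => /Hmin; rewrite leqNgt Hm.
Qed.

Lemma bs_eval_fst_le w : `|(bs_eval k w).1| <= (size w)%:R :> int.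
Proof.
elim: w => [|[[] b] w IH] //=; rewrite /bs_mul /=.
  rewrite -addn1 natrD addrC; apply: le_trans (ler_normD _ _) _.
  by case: b; rewrite /= ?normrN lerD.
by case: b; rewrite /= add0r (le_trans IH) // ler_nat.
Qed.

Lemma class_reps_sub s : {subset class_reps k s <= s}.
Proof.
elim: s => [|x s IH] //= y; case: asboolP => _; first by move/IH; rewrite inE orbC => ->.
by rewrite !inE => /orP[->|/IH ->]; rewrite ?orbT.
Qed.

Lemma size_class_reps s : (size (class_reps k s) <= size s)%N.
Proof. by elim: s => [|x s IH] //=; case: asboolP => _ /=; [apply: leqW|]. Qed.

Lemma class_reps_cover s g : g \in s ->
  exists2 r, r \in class_reps k s & conj_bs k g r.
Proof.
elim: s g => [|x s IH] // g; rewrite inE => /orP[/eqP ->|Hg] /=.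
  case: asboolP => [[h Hh Hc]|_]; last by exists x; [apply: mem_head|apply: conj_bs_refl].
  by have [r Hr Hc'] := IH h Hh; exists r => //; apply: (conj_bs_trans k_gt0) Hc Hc'.
have [r Hr Hc] := IH g Hg; exists r => //.
by case: asboolP => _ //; rewrite inE Hr orbT.
Qed.

Lemma mem_cyc_minP n h : h \in cyc_min k n <->
  has_len k h n /\
  ~ (exists h', exists2 m, (m < n)%N & has_len k h' m /\ conj_bs k h h').
Proof.
rewrite mem_filter mem_undup mem_filter; split.
  by move=> /andP[/asboolP H /andP[Hl _]].
by move=> [Hl Hn]; rewrite Hl; apply/and3P; split; [apply/asboolP| |apply: has_len_reach].
Qed.

Lemma class_rep_has_len j r :
  r \in class_reps k (cyc_min k j) -> has_len k r j.
Proof. by move/class_reps_sub/mem_cyc_minP => []. Qed.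

Lemma reach_conj_class_rep n g : reach k n g ->
  exists j, exists2 r, (j <= n)%N & r \in class_reps k (cyc_min k j) /\ conj_bs k g r.
Proof.
move=> Hr.
have ex : exists j, `[< exists h, has_len k h j /\ conj_bs k g h >].
  have [j _ Hj] := reach_has_len Hr; exists j; apply/asboolP.
  by exists g; split => //; apply: conj_bs_refl.
case: (ex_minnP ex) => j /asboolP [h [Hh Hc]] Hmin.
have Hjn : (j <= n)%N.
  have [j' Hj'n Hj'] := reach_has_len Hr; apply: leq_trans Hj'n; apply: Hmin.
  by apply/asboolP; exists g; split => //; apply: conj_bs_refl.
have Hin : h \in cyc_min k j.
  apply/mem_cyc_minP; split => // -[h' [m Hm [Hl' Hc']]].
  have : (j <= m)%N.
    by apply: Hmin; apply/asboolP; exists h'; split => //; apply: (conj_bs_trans k_gt0) Hc Hc'.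
  by rewrite leqNgt Hm.
have [r Hr2 Hc2] := class_reps_cover Hin.
by exists j, r => //; split => //; apply: (conj_bs_trans k_gt0) Hc Hc2.
Qed.

Lemma conj_sph_le_sph n : (conj_sph k n <= sph k n)%N.
Proof.
apply: leq_trans (size_class_reps _) _.
by rewrite size_filter count_size.
Qed.

Lemma bs_eval_tpow n : bs_eval k (nseq n (true, false)) = (n%:Z, 0).
Proof.
elim: n => [|n IH] //=; rewrite IH /bs_mul /= mulr0 addr0.
by rewrite -addn1 PoszD addrC.
Qed.

Lemma conj_sph_gt0 n : (0 < conj_sph k n)%N.
Proof.
set tn := nseq n (true, false).
have /reach_conj_class_rep [j [r Hjn [Hr Hc]]] : reach k n (bs_eval k tn).
  by apply/reachP; exists tn; rewrite ?size_nseq.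
have /has_len_reach /reachP [w Hw Hwe] := class_rep_has_len Hr.
have := bs_eval_fst_le w; rewrite Hwe -(conj_bs_fst Hc) bs_eval_tpow Hw.
rewrite -natz normr_nat ler_nat => Hnj.
have -> : n = j by apply/eqP; rewrite eqn_leq Hnj Hjn.
by move: Hr; rewrite /conj_sph; case: (class_reps k (cyc_min k j)).
Qed.

End Words.

Section Digits.
Variable k : nat.
Local Notation kq := (k%:R : rat).

Definition digval (c : seq int) : int := foldr (fun ci v => ci + k%:Z * v) 0 c.
Definition digabs (c : seq int) : nat := sumn (map absz c).

Lemma digval_rcons0 (c : seq int) : digval (rcons c 0) = digval c.
Proof. by elim: c => [|x c IH] /=; rewrite ?IH // mulr0 addr0. Qed.

Lemma digabs_rcons0 (c : seq int) : digabs (rcons c 0) = digabs c.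
Proof. by rewrite /digabs map_rcons -cats1 sumn_cat addn0. Qed.

Lemma digval_set (c : seq int) p (d : int) : (p < size c)%N ->
  digval (set_nth 0 c p (c`_p + d)) = digval c + d * k%:Z ^+ p.
Proof.
elim: c p => [|x c IH] [|p] //= Hp; first by rewrite expr0 mulr1 addrAC.
by rewrite IH // exprS; ring.
Qed.

Lemma digabs_set (c : seq int) p (d : int) : (p < size c)%N ->
  (digabs (set_nth 0 c p (c`_p + d))%R <= digabs c + absz d)%N.
Proof.
elim: c p => [|x c IH] [|p] //= Hp; first by rewrite addnAC leq_add2r; lia.
by rewrite -addnA leq_add2l; apply: IH.
Qed.

Definition digit_form (n : nat) (x : rat) := exists p c,
  [/\ (p < size c)%N, (digabs c + (size c).-1 <= n)%N & x * kq ^+ p = (digval c)%:~R].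

Lemma digit_form0 : digit_form 0 0.
Proof. by exists 0%N, [:: 0]; split => //=; rewrite mul0r mulr0 addr0. Qed.

Lemma digit_form_addz (d : int) n x : (absz d <= 1)%N ->
  digit_form n x -> digit_form n.+1 (x + d%:~R).
Proof.
move=> Hd [p [c [Hp Hs He]]]; exists p, (set_nth 0 c p (c`_p + d)).
rewrite size_set_nth (maxn_idPr Hp) digval_set //; split => //.
  by apply: leq_trans (leq_add (digabs_set d Hp) (leqnn _)) _; lia.
by rewrite mulrDl He rmorphD /= rmorphM /= rmorphXn.
Qed.

Lemma digit_form_mulk n x : digit_form n x -> digit_form n.+1 (kq * x).
Proof.
move=> [p [c [Hp Hs He]]]; case: p Hp He => [|p] Hp He.
  exists 0%N, (0 :: c); split => //=; first by move: Hs Hp; rewrite /digabs /=; lia.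
  by rewrite rmorphD rmorphM /= -He !expr0 !mulr1 add0r.
by exists p, c; split; [lia|lia|rewrite -He exprS mulrCA mulrA].
Qed.

Definition apow (z : int) : seq letter := nseq (absz z) (false, z < 0).

Definition digits_word (c : seq int) (m : nat) : seq letter :=
  foldr (fun ci w => apow ci ++ (true, false) :: w) (nseq m (true, false)) c.

Lemma bs_eval_nseq_a n (b : bool) w : bs_eval k (nseq n (false, b) ++ w) =
  ((bs_eval k w).1, (bs_eval k w).2 + (if b then - n%:R else n%:R)).
Proof.
case: b; elim: n => [|n IH] /=; try by case: (bs_eval k w) => x y; rewrite ?oppr0 addr0.
all: rewrite IH /bs_mul /= expr0z mul1r add0r -[n.+1]addn1 natrD; congr pair; lra.
Qed.

Lemma bs_eval_apow z w :
  bs_eval k (apow z ++ w) = ((bs_eval k w).1, (bs_eval k w).2 + z%:~R).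
Proof.
by rewrite /apow bs_eval_nseq_a; congr pair; case: z.
Qed.

Lemma bs_eval_digits_word (c : seq int) m :
  bs_eval k (digits_word c m) = ((size c + m)%N%:Z, (digval c)%:~R).
Proof.
elim: c => [|x c IH] /=; first by rewrite bs_eval_tpow.
rewrite bs_eval_apow /= IH /bs_mul /= expr1z addr0; congr pair.
by rewrite rmorphD rmorphM /= addrC.
Qed.

Lemma size_digits_word (c : seq int) m :
  size (digits_word c m) = (digabs c + size c + m)%N.
Proof.
elim: c => [|x c IH] /=; first by rewrite size_nseq.
by rewrite size_cat /= IH size_nseq /digabs /=; ring.
Qed.

Hypothesis k_gt0 : (0 < k)%N.

Lemma digval_bound (c : seq int) : (absz (digval c) <= digabs c * k ^ (size c).-1)%N.
Proof.
elim: c => [|x [|y c] IH] //.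
  by rewrite /= mulr0 addr0 /digabs /= expn0 muln1 addn0.
move: IH; set v := digval (y :: c); set s := digabs (y :: c) => IH.
have -> : digabs [:: x, y & c] = (absz x + s)%N by [].
have -> : digval [:: x, y & c] = x + k%:Z * v by [].
apply: leq_trans (_ : absz x + k * absz v <= _)%N.
  by have := abszM k%:Z v; rewrite absz_nat => <-; lia.
rewrite mulnDl leq_add //; first by rewrite leq_pmulr // expn_gt0 k_gt0.
by rewrite /= expnS mulnCA leq_mul2l IH orbT.
Qed.

Lemma digit_form_divk n x : digit_form n x -> digit_form n.+1 (x / kq).
Proof.
move=> [p [c [Hp Hs He]]].
have He' : x / kq * kq ^+ p.+1 = (digval c)%:~R.
  by rewrite exprS mulrA divfK ?(kq_neq0 k_gt0).
case: (ltnP p.+1 (size c)) => Hp1; first by exists p.+1, c; split => //; lia.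
exists p.+1, (rcons c 0); rewrite size_rcons digval_rcons0 digabs_rcons0.
by split => //; lia.
Qed.

Lemma digit_form_eval w : digit_form (size w) (bs_eval k w).2.
Proof.
elim: w => [|[[] []] w IH] /=; first exact: digit_form0.
all: rewrite /bs_mul /=.
- by rewrite exprN1 addr0 mulrC; apply: digit_form_divk.
- by rewrite expr1z addr0; apply: digit_form_mulk.
- by move: (digit_form_addz (d := -1) isT IH); rewrite expr0z mul1r rmorphN1.
- by move: (digit_form_addz (d := 1) isT IH); rewrite expr0z mul1r rmorph1.
Qed.

End Digits.

Section Zk.
Variable k : nat.
Hypothesis k_gt0 : (0 < k)%N.
Local Notation kq := (k%:R : rat).

Definition in_Zk (x : rat) := exists e (z : int), x * kq ^+ e = z%:~R.

Lemma in_Zk_int (z : int) : in_Zk z%:~R.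
Proof. by exists 0%N, z; rewrite mulr1. Qed.

Lemma in_ZkD x y : in_Zk x -> in_Zk y -> in_Zk (x + y).
Proof.
move=> [e1 [z1 H1]] [e2 [z2 H2]].
exists (e1 + e2)%N, (z1 * k%:Z ^+ e2 + z2 * k%:Z ^+ e1).
by rewrite exprD rmorphD /= !rmorphM /= !rmorphXn /= -H1 -H2; ring.
Qed.

Lemma in_ZkM x y : in_Zk x -> in_Zk y -> in_Zk (x * y).
Proof.
move=> [e1 [z1 H1]] [e2 [z2 H2]]; exists (e1 + e2)%N, (z1 * z2).
by rewrite exprD rmorphM /= -H1 -H2; ring.
Qed.

Lemma in_ZkN x : in_Zk x -> in_Zk (- x).
Proof. by move=> [e [z H]]; exists e, (- z); rewrite mulNr H rmorphN. Qed.

Lemma in_Zk_expz (z : int) : in_Zk (kq ^ z).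
Proof.
case: z => n; first by exists 0%N, (k%:Z ^+ n); rewrite mulr1 rmorphXn.
by exists n.+1, 1; rewrite NegzE -exprnN mulVf // expf_neq0 // (kq_neq0 k_gt0).
Qed.

Lemma in_Zk_eval w : in_Zk (bs_eval k w).2.
Proof.
elim: w => [|l w IH]; first exact: (in_Zk_int 0).
rewrite /= /bs_mul; apply: in_ZkD; first exact: in_ZkM (in_Zk_expz _) IH.
by case: l => [[] []]; [apply: (in_Zk_int 0)|apply: (in_Zk_int 0)|
  apply: (in_Zk_int (-1))|apply: (in_Zk_int 1)].
Qed.

Lemma in_Zk_geom (M m : nat) :
  exists2 d, in_Zk d & kq ^+ (m * M) - 1 = (kq ^+ M - 1) * d.
Proof.
exists (\sum_(i < m) (kq ^+ M) ^+ (m.-1 - i)).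
  by apply: (big_ind in_Zk) => [|x y|i _]; [apply: (in_Zk_int 0)|apply: in_ZkD|
    rewrite -exprM; apply: (in_Zk_expz (Posz _))].
rewrite mulnC exprM; have := subrXX (kq ^+ M) 1 m; rewrite expr1n => ->.
by congr (_ * _); apply: eq_bigr => i _; rewrite expr1n mulr1.
Qed.

Lemma in_Zk_geomz (M : nat) (s : int) :
  exists2 d, in_Zk d & kq ^ (s * M%:Z) - 1 = (kq ^+ M - 1) * d.
Proof.
case: s => m; first by rewrite -PoszM; apply: in_Zk_geom.
have [d Zd Hd] := in_Zk_geom M m.+1.
have Hx : kq ^+ (m.+1 * M) != 0 by rewrite expf_neq0 // (kq_neq0 k_gt0).
exists (- d / kq ^+ (m.+1 * M)).
  by apply: in_ZkM (in_ZkN Zd) _; rewrite exprnN; apply: in_Zk_expz.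
rewrite NegzE mulNr -PoszM -exprnN mulrA mulrN -Hd; field.
exact: Hx.
Qed.

Lemma coprime_expn_sub1 M e : (0 < M)%N -> coprime (k ^ M - 1) (k ^ e).
Proof.
move=> M_gt0; case: e => [|e]; first by rewrite coprimen1.
rewrite coprime_pexpr //.
have : coprime (k ^ M - 1) (k ^ M) by rewrite subn1 coprimePn // expn_gt0 k_gt0.
by apply: coprime_dvdr; rewrite -{1}(expn1 k) dvdn_exp2l.
Qed.

Lemma small_multiple_eq0 M (z : int) D : (0 < M)%N -> in_Zk D ->
  z%:~R = (kq ^+ M - 1) * D -> (absz z < k ^ M - 1)%N -> z = 0.
Proof.
move=> M_gt0 [e [y Hy]] Hz Hlt.
have kM_ge1 : (1 <= k ^ M)%N by rewrite expn_gt0 k_gt0.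
have Hint : z * (k ^ e)%N%:Z = (k ^ M - 1)%N%:Z * y.
  apply: (@intr_inj rat); rewrite !rmorphM /= -Hy Hz -subzn //.
  by rewrite rmorphB /= rmorph1 -!pmulrn !natrX mulrA.
have Hd : (k ^ M - 1 %| absz z)%N.
  rewrite -(Gauss_dvdl _ (coprime_expn_sub1 e M_gt0)).
  by move: (congr1 absz Hint); rewrite !abszM !absz_nat => ->; apply: dvdn_mulr.
have [/eqP|z_gt0] := posnP (absz z); first by rewrite absz_eq0 => /eqP.
by have := dvdn_leq z_gt0 Hd; rewrite leqNgt Hlt.
Qed.

Lemma conj_tpow_fiber M (V1 V2 : int) (y : bs_elt) : (0 < M)%N ->
  in_Zk y.2 -> (M%:Z %| y.1)%Z ->
  bs_mul k y (M%:Z, V1%:~R) = bs_mul k (M%:Z, V2%:~R) y ->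
  (absz (V1 - V2) < k ^ M - 1)%N -> V1 = V2.
Proof.
case: y => q eta /= M_gt0 Zeta /dvdzP [s ->] /(congr1 snd) /= Hc Hlt.
have [d Zd Hd] := in_Zk_geomz M s.
apply/eqP; rewrite -subr_eq0; apply/eqP.
apply: (small_multiple_eq0 (M := M) (D := eta - d * V1%:~R)) => //.
  by apply: in_ZkD Zeta (in_ZkN (in_ZkM Zd (in_Zk_int _))).
have Hs : kq ^ (s * M%:Z) = 1 + (kq ^+ M - 1) * d by rewrite -Hd addrC subrK.
rewrite rmorphB /= (_ : V2%:~R = (1 + (kq ^+ M - 1) * d) * V1%:~R + eta - kq ^+ M * eta).
  by ring.
by rewrite -Hs Hc; change (kq ^ M%:Z) with (kq ^+ M); ring.
Qed.

End Zk.

Lemma uniq_size_le_encoding (T U : eqType) (P : T -> U -> Prop)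
    (s : seq T) (us : seq U) :
  (forall x y u, P x u -> P y u -> x = y) -> uniq s ->
  {in s, forall x, exists2 u, u \in us & P x u} -> (size s <= size us)%N.
Proof.
move=> Pinj; elim: s us => [|x s IH] us //= /andP[xNs s_uniq] Hs.
have [u u_us Pxu] := Hs x (mem_head x s).
have us_gt0 : (0 < size us)%N by case: us u_us {Hs}.
rewrite -(prednK us_gt0) -(size_rem u_us) ltnS; apply: IH => // y ys.
have [v v_us Pyv] : exists2 v, v \in us & P y v by apply: Hs; rewrite inE ys orbT.
exists v => //; apply: rem_mem v_us; apply: contraNneq xNs => vu.
by rewrite vu in Pyv; rewrite (Pinj _ _ _ Pxu Pyv).
Qed.

Definition pad (n : nat) : nat := (trunc_log 2 n).+2.

Lemma exp2_pad_le n : (2 ^ pad n <= 4 * n.+1)%N.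
Proof.
rewrite /pad !expnS mulnA leq_mul2l /=.
by case: n => [|n] //; apply: leq_trans (trunc_logP (leqnn 2) (ltn0Sn n)) _.
Qed.

Lemma pad_le n : (pad n < 4 * n.+1)%N.
Proof. exact: leq_trans (ltn_expl _ (leqnn 2)) (exp2_pad_le n). Qed.

Lemma pad_exp_ge k n : (1 < k)%N -> (2 * n + 1 <= k ^ pad n)%N.
Proof.
move=> k_gt1; apply: leq_trans (_ : 2 ^ pad n <= _)%N; last by rewrite leq_exp2r.
by have := @trunc_log_ltn 2 n isT; rewrite /pad !expnS; lia.
Qed.

Definition key := ((nat * nat) * (nat * (nat * nat)))%type.

Definition keys (k n : nat) : seq key :=
  let L := (n + pad n).+2 in
  [seq (ji, apr) | ji <- [seq (j, i) | j <- iota 0 L, i <- iota 0 (conj_sph k j)],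
     apr <- [seq (a, pr) | a <- iota 0 (2 * n + 1),
               pr <- [seq (p, r) | p <- iota 0 n.+1, r <- iota 0 L]]].

Lemma size_keys k n : size (keys k n) =
  ((\sum_(j < (n + pad n).+2) conj_sph k j) *
   ((2 * n + 1) * (n.+1 * (n + pad n).+2)))%N.
Proof.
rewrite /keys !size_allpairs !size_iota size_allpairs_dep sumnE big_map.
rewrite -(big_mkord xpredT) /index_iota subn0; congr (_ * _)%N.
by apply: eq_bigr => j _; rewrite size_iota.
Qed.

Lemma mem_keys k n j i a p r :
  (j < (n + pad n).+2)%N -> (i < conj_sph k j)%N -> (a < 2 * n + 1)%N ->
  (p <= n)%N -> (r < (n + pad n).+2)%N -> ((j, i), (a, (p, r))) \in keys k n.
Proof.
move=> Hj Hi Ha Hp Hr; apply: allpairs_f; last first.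
  by apply: allpairs_f; rewrite ?mem_iota //; apply: allpairs_f; rewrite mem_iota.
apply/flattenP; exists [seq (j, i0) | i0 <- iota 0 (conj_sph k j)].
  apply: (map_f (fun j => [seq (j, i0) | i0 <- iota 0 (conj_sph k j)])).
  by rewrite mem_iota.
by apply: map_f; rewrite mem_iota.
Qed.

Section Counting.
Variable k : nat.
Hypothesis k_gt1 : (1 < k)%N.
Let k_gt0 : (0 < k)%N := ltnW k_gt1.
Local Notation kq := (k%:R : rat).

(* The key of g records a minimal representative rho of the conjugacy class of
   a^V t^M (its length j and index i), the shifted t-exponent a of g, the
   exponent p with g.2 k^p = V, and the residue r modulo M of the t-exponent of
   a conjugator w of a^V t^M to rho. *)
Definition encodes (n : nat) (g : bs_elt) (x : key) : Prop :=
  let: ((j, i), (a, (p, r))) := x in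
  exists M (V : int) w,
  [/\ g.1 + n%:Z = a%:Z /\ g.2 * kq ^+ p = V%:~R,
      (0 < M)%N /\ (2 * absz V < k ^ M - 1)%N,
      bs_mul k (bs_eval k w) (M%:Z, V%:~R) =
        bs_mul k (nth bs_one (class_reps k (cyc_min k j)) i) (bs_eval k w)
    & r = absz ((bs_eval k w).1 %% M%:Z)%Z].

Lemma digval_small n (c : seq int) : (0 < size c)%N ->
  (digabs c + (size c).-1 <= n)%N ->
  (2 * absz (digval k c) < k ^ (size c + pad n) - 1)%N.
Proof.
move=> c_gt0 Hc; have Hb := digval_bound k_gt0 c; have Hpad := pad_exp_ge n k_gt1.
rewrite expnD -(prednK c_gt0) expnS.
move: Hb Hpad; set A := absz _; set X := (k ^ _)%N; set Y := (k ^ pad n)%N.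
have X_gt0 : (0 < X)%N by rewrite expn_gt0 k_gt0.
move=> Hb Hpad.
have H1 : (2 * A <= 2 * n * X)%N.
  by rewrite -mulnA leq_mul2l; apply: leq_trans Hb _; rewrite leq_mul2r; lia.
have H2 : (2 * n * X + X <= X * Y)%N by rewrite -mulSnr mulnC leq_mul2l -addn1 Hpad orbT.
have H3 : (2 * (X * Y) <= k * X * Y)%N by rewrite -mulnA leq_mul2r k_gt1 orbT.
lia.
Qed.

Lemma encodes_inj n g1 g2 x : encodes n g1 x -> encodes n g2 x -> g1 = g2.
Proof.
case: x => [[j i] [a [p r]]] /=; set rho := nth _ _ _.
move=> [M1 [V1 [w1 [[A1 E1] [M1_gt0 B1] C1 R1]]]].
move=> [M2 [V2 [w2 [[A2 E2] [_ B2] C2 R2]]]].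
have eM : M1 = M2.
  have /conj_bs_fst /= H1 : conj_bs k (M1%:Z, V1%:~R) rho by exists w1.
  have /conj_bs_fst /= H2 : conj_bs k (M2%:Z, V2%:~R) rho by exists w2.
  by apply/eqP; rewrite -eqz_nat H1 H2.
rewrite -{M2}eM in B2 C2 R2.
set y := bs_eval k (inv_word w2 ++ w1).
have Hy : bs_mul k y (M1%:Z, V1%:~R) = bs_mul k (M1%:Z, V2%:~R) y.
  exact: conj_common_target C1 C2.
have M1_dvd : (M1%:Z %| y.1)%Z.
  rewrite /y (bs_eval_cat k_gt0) /= (bs_eval_inv_word_fst k_gt0) addrC -eqz_mod_dvd.
  have mod_ge0 q : 0 <= (q %% M1%:Z)%Z by rewrite modz_ge0 // eqz_nat -lt0n.
  by rewrite -[X in X == _]gez0_abs // -[X in _ == X]gez0_abs // -R1 -R2.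
have eV : V1 = V2.
  apply: (conj_tpow_fiber k_gt0 M1_gt0 (in_Zk_eval k_gt0 _) M1_dvd Hy).
  by move: B1 B2; set A := (k ^ M1 - 1)%N; lia.
have e2 : g1.2 = g2.2.
  by apply: (mulIf (expf_neq0 p (kq_neq0 k_gt0))); rewrite E1 E2 eV.
have e1 : g1.1 = g2.1 by apply: (@addIr _ n%:Z); rewrite A1 A2.
by case: g1 g2 e1 e2 {A1 E1 A2 E2} => ? ? [? ?] /= -> ->.
Qed.

Lemma encodes_exists n g : has_len k g n -> exists2 x, x \in keys k n & encodes n g x.
Proof.
case/has_len_reach/reachP => w Hw eg.
have [p [c [Hp Hc He]]] := digit_form_eval k_gt0 w; rewrite Hw eg in Hc He.
have Hg1 := bs_eval_fst_le k w; rewrite Hw eg in Hg1.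
set M := (size c + pad n)%N; set V := digval k c.
have c_gt0 : (0 < size c)%N by apply: leq_ltn_trans Hp.
have M_gt0 : (0 < M)%N by rewrite addn_gt0 c_gt0.
have /(reach_conj_class_rep k_gt0) [j [rho Hj [Hrho [wx Hx]]]] :
    reach k (size (digits_word c (pad n))) (M%:Z, V%:~R).
  by apply/reachP; exists (digits_word c (pad n)); rewrite ?bs_eval_digits_word.
rewrite size_digits_word in Hj.
set q := (bs_eval k wx).1.
have q_mod_ge0 : 0 <= (q %% M%:Z)%Z by rewrite modz_ge0 // eqz_nat -lt0n.
have q_mod_lt : (q %% M%:Z)%Z < M%:Z by rewrite ltz_pmod // ltz_nat.
exists ((j, index rho (class_reps k (cyc_min k j))),
        (absz (g.1 + n%:Z), (p, absz (q %% M%:Z)%Z))).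
  apply: mem_keys; rewrite ?index_mem //; lia.
rewrite /= nth_index //; exists M, V, wx; split => //.
- by rewrite gez0_abs //; lia.
- by split => //; apply: digval_small.
Qed.

Lemma sph_le_keys n : (sph k n <= size (keys k n))%N.
Proof.
apply: (uniq_size_le_encoding (@encodes_inj n)); first exact: undup_uniq.
by move=> g; rewrite mem_undup mem_filter => /andP[/encodes_exists].
Qed.

Lemma sph_le_conj_sph_sum n :
  (sph k n <= 10 * n.+1 ^ 3 * \sum_(j < (n + pad n).+2) conj_sph k j)%N.
Proof.
apply: leq_trans (sph_le_keys n) _; rewrite size_keys mulnC leq_mul2r.
by apply/orP; right; have := pad_le n; nia.
Qed.

End Counting.

Section GrowthRate.
Variable R : realType.
Local Open Scope ereal_scope.

Lemma limn_esup_einf (x : (\bar R)^nat) : limn_esup x = ereal_inf (range (esups x)).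
Proof. by rewrite limn_esup_lim; apply: cvg_lim => //; apply: cvg_esups_inf. Qed.

Lemma limn_esup_le_ev (x : (\bar R)^nat) N l :
  (forall n, (N <= n)%N -> x n <= l) -> limn_esup x <= l.
Proof.
move=> H; rewrite limn_esup_einf; apply: ge_ereal_inf; exists (esups x N) => //.
by apply: ge_ereal_sup => _ [m /= Hm <-]; apply: H.
Qed.

Lemma limn_esup_ge_often (x : (\bar R)^nat) l :
  (forall N, exists2 n, (N <= n)%N & l <= x n) -> l <= limn_esup x.
Proof.
move=> H; rewrite limn_esup_einf; apply: le_ereal_inf_tmp => _ [N _ <-].
have [n Hn Hl] := H N; apply: le_trans Hl _.
by apply: ereal_sup_ubound; exists n.
Qed.

Lemma limn_esup_lt_ev (x : (\bar R)^nat) l :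
  limn_esup x < l -> exists N, forall n, (N <= n)%N -> x n < l.
Proof.
rewrite limn_esup_einf => /ereal_inf_lt [_ [N _ <-] Hy]; exists N => n Hn.
by apply: le_lt_trans Hy; apply: ereal_sup_ubound; exists n.
Qed.

Lemma le_limn_esup (x y : (\bar R)^nat) :
  (forall n, x n <= y n) -> limn_esup x <= limn_esup y.
Proof.
move=> H; rewrite [X in _ <= X]limn_esup_einf; apply: le_ereal_inf_tmp => _ [N _ <-].
apply: (limn_esup_le_ev (N := N)) => n Hn; apply: le_trans (H n) _.
by apply: ereal_sup_ubound; exists n.
Qed.

Local Close Scope ereal_scope.

Lemma powR_natinv_lt (x n : nat) (b : R) : (0 < n)%N ->
  powR x%:R n%:R^-1 < b -> x%:R <= b ^+ n.
Proof.
move=> n_gt0 H.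
have -> : (x%:R : R) = powR (powR x%:R n%:R^-1) n%:R.
  by rewrite -powRrM mulVf ?pnatr_eq0 -?lt0n // powRr1.
rewrite powR_mulrn ?powR_ge0 //; apply: lerXn2r; rewrite ?nnegrE ?powR_ge0 //.
  by apply: le_trans (ltW H); apply: powR_ge0.
exact: ltW.
Qed.

Lemma powR_natinv_le (x n : nat) (y : R) : (0 < n)%N -> 0 <= y ->
  x%:R <= y ^+ n -> powR x%:R n%:R^-1 <= y.
Proof.
move=> n_gt0 y_ge0 H; apply: le_trans (_ : powR (y ^+ n) n%:R^-1 <= _).
  by apply: ge0_ler_powR; rewrite ?nnegrE ?invr_ge0 ?exprn_ge0.
by rewrite -powR_mulrn // -powRrM mulfV ?pnatr_eq0 -?lt0n // powRr1.
Qed.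

Lemma poly_le_expR (C eta : R) (D : nat) : 0 < eta ->
  exists N, forall n, (N <= n)%N -> C * n.+1%:R ^+ D <= expR (eta * n%:R).
Proof.
move=> eta_gt0; set F := (D.+1)`!%:R : R.
have F_gt0 : 0 < F by rewrite ltr0n fact_gt0.
set A := `|C| * 2 ^+ D * F / eta ^+ D.+1.
exists (Num.trunc A).+1 => n Hn.
have A_le : A <= n%:R by apply: le_trans (ltW (truncnS_gt A)) _; rewrite ler_nat.
have n_gt0 : (0 : R) < n%:R by rewrite ltr0n; apply: leq_trans Hn.
apply: le_trans (_ : `|C| * (2 * n%:R) ^+ D <= _).
  apply: le_trans (ler_wpM2r (exprn_ge0 _ (ler0n _ _)) (ler_norm C)) _.
  apply: ler_wpM2l => //; apply: lerXn2r; rewrite ?nnegrE ?mulr_ge0 //.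
  by rewrite -natrM ler_nat; lia.
apply: le_trans (expR_ge1Dxn D (mulr_ge0 (ltW eta_gt0) (ltW n_gt0))).
rewrite -[X in X <= _]add0r lerD //.
have -> : `|C| * (2 * n%:R) ^+ D = (`|C| * 2 ^+ D) * n%:R ^+ D by rewrite exprMn mulrA.
have -> : (eta * n%:R) ^+ D.+1 / F = (n%:R * (eta ^+ D.+1 / F)) * n%:R ^+ D.
  by rewrite exprMn !exprS; field; rewrite gt_eqF.
apply: ler_wpM2r; first exact: exprn_ge0.
have -> : `|C| * 2 ^+ D = A * (eta ^+ D.+1 / F).
  by rewrite /A !exprS; field; rewrite (gt_eqF F_gt0) (gt_eqF eta_gt0) gt_eqF ?exprn_gt0.
by apply: ler_wpM2r => //; rewrite divr_ge0 ?exprn_ge0 // ltW.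
Qed.

Lemma le_growth_rate (u v : nat -> nat) :
  (forall n, (u n <= v n)%N) -> (growth_rate R u <= growth_rate R v)%E.
Proof.
move=> H; apply: le_limn_esup => n; rewrite lee_fin.
by apply: ge0_ler_powR; rewrite ?nnegrE ?invr_ge0 ?ler_nat.
Qed.

Lemma growth_rate_ge1 (v : nat -> nat) :
  (forall n, (0 < v n)%N) -> (1%:E <= growth_rate R v)%E.
Proof.
move=> v_gt0; apply: limn_esup_ge_often => N; exists N.+1 => //.
rewrite lee_fin -[X in X <= _](powRr0 (v N.+1)%:R).
by apply: ler_powR; rewrite ?ler1n ?invr_ge0.
Qed.

Lemma growth_rate_lt_geometric (v : nat -> nat) (b : R) : 1 <= b ->
  (growth_rate R v < b%:E)%E -> exists K : nat, forall j, (v j)%:R <= K%:R * b ^+ j.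
Proof.
move=> b_ge1 /limn_esup_lt_ev [N HN].
exists (\max_(i < N.+1) v i).+1 => j.
have [j_le|j_gt] := leqP j N.
  have : (v j <= \max_(i < N.+1) v i)%N.
    by rewrite (bigD1 (Ordinal (j_le : (j < N.+1)%N))) //= leq_maxl.
  move=> /leqW; rewrite -(ler_nat R) => Hv.
  by rewrite -[X in X <= _]mulr1; apply: ler_pM; rewrite ?exprn_ege1.
have /powR_natinv_lt Hv : (powR (v j)%:R j%:R^-1 < b)%R.
  by rewrite -lte_fin; apply: HN; apply: ltnW.
rewrite -[X in X <= _]mul1r; apply: ler_pM; rewrite ?exprn_ge0 ?ler1n //.
by apply: Hv; apply: leq_ltn_trans j_gt.
Qed.

Lemma growth_rate_le_poly_geometric (u : nat -> nat) (b C : R) (D : nat) : 0 < b ->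
  (forall n, (u n)%:R <= C * n.+1%:R ^+ D * b ^+ n) -> (growth_rate R u <= b%:E)%E.
Proof.
move=> b_gt0 Hu; apply/lee_addgt0Pr => eps eps_gt0.
set th := eps / b; have th_gt0 : 0 < th by rewrite divr_gt0.
have /(poly_le_expR C D) [N HN] : 0 < ln (1 + th) by rewrite ln_gt0 // ltrDl.
apply: (limn_esup_le_ev (N := maxn N 1)) => n; rewrite geq_max => /andP[nN n_gt0].
rewrite lee_fin; apply: powR_natinv_le => //; first by rewrite addr_ge0 // ltW.
apply: le_trans (Hu n) _; apply: le_trans (_ : expR (ln (1 + th) * n%:R) * b ^+ n <= _).
  by apply: ler_wpM2r; [rewrite exprn_ge0 // ltW|apply: HN].
by rewrite expRM_natr lnK ?posrE ?addr_gt0 // -exprMn mulrDl mul1r /th divfK ?gt_eqF.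
Qed.

Lemma pow_pad_le (b : R) n : 1 <= b -> b ^+ pad n <= (4 * n.+1)%:R ^+ Num.trunc b.
Proof.
move=> b_ge1; have b_le : b <= 2 ^+ Num.trunc b.
  by apply: le_trans (ltW (truncnS_gt b)) _; rewrite -natrX ler_nat ltn_expl.
apply: le_trans (_ : (2 ^+ Num.trunc b) ^+ pad n <= _).
  by apply: lerXn2r; rewrite ?nnegrE // (le_trans _ b_ge1).
by rewrite exprAC; apply: lerXn2r; rewrite ?nnegrE // -natrX ler_nat exp2_pad_le.
Qed.

Lemma sum_le_geometric (v : nat -> nat) (K : nat) (b : R) L : 1 <= b ->
  (forall j, (v j)%:R <= K%:R * b ^+ j) ->
  (\sum_(j < L.+1) v j)%N%:R <= L.+1%:R * (K%:R * b ^+ L).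
Proof.
move=> b_ge1 HK; rewrite natr_sum.
apply: le_trans (_ : \sum_(j < L.+1) (K%:R * b ^+ L) <= _).
  apply: ler_sum => j _; apply: le_trans (HK j) _.
  by apply: ler_wpM2l => //; apply: ler_weXn2l => //; rewrite -ltnS.
by rewrite big_const_ord iter_addr_0 [X in _ <= X]mulr_natl.
Qed.

Lemma growth_rate_le_sum (u v : nat -> nat) (C D : nat) :
  (forall n, (0 < v n)%N) ->
  (forall n, (u n <= C * n.+1 ^ D * \sum_(j < (n + pad n).+2) v j)%N) ->
  (growth_rate R u <= growth_rate R v)%E.
Proof.
move=> v_gt0 Hu; have := growth_rate_ge1 v_gt0.
case Eg: (growth_rate R v) => [r| |] // r_ge1; last exact: leey.
rewrite lee_fin in r_ge1; apply/lee_addgt0Pr => eps eps_gt0; set b := r + eps.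
have b_ge1 : 1 <= b by rewrite /b; lra.
have b_ge0 : 0 <= b by lra.
have [K HK] : exists K : nat, forall j, (v j)%:R <= K%:R * b ^+ j.
  by apply: growth_rate_lt_geometric => //; rewrite Eg lte_fin /b ltrDl.
set d := Num.trunc b.
(* The constant comes from (n + pad n).+2 <= 5 * n.+1 and
   b ^+ pad n <= (4 * n.+1) ^+ d (pow_pad_le). *)
apply: (growth_rate_le_poly_geometric (C := C%:R * 5 * K%:R * b * 4%:R ^+ d)
  (D := (D + 1 + d)%N)); first lra.
move=> n; set P := C%:R * n.+1%:R ^+ D * K%:R * b ^+ n * b.
have P_ge0 : 0 <= P by rewrite /P !mulr_ge0 ?exprn_ge0.
rewrite -/b (_ : C%:R * 5 * K%:R * b * 4 ^+ d * n.+1%:R ^+ (D + 1 + d) * b ^+ n =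
  P * (5 * n.+1)%:R * (4 * n.+1)%:R ^+ d); last by rewrite /P !exprD !natrM exprMn; ring.
apply: le_trans (_ : (C * n.+1 ^ D)%N%:R * ((n + pad n).+2%:R *
    (K%:R * b ^+ (n + pad n).+1)) <= _).
  apply: le_trans (ler_wpM2l (ler0n _ _) (sum_le_geometric _ b_ge1 HK)).
  by rewrite -natrM ler_nat.
rewrite (_ : (C * n.+1 ^ D)%N%:R * _ = P * (n + pad n).+2%:R * b ^+ pad n); last first.
  by rewrite /P natrM natrX exprS exprD; ring.
apply: ler_pM; [exact: mulr_ge0|exact: exprn_ge0| |exact: pow_pad_le].
by apply: ler_wpM2l => //; rewrite ler_nat; have := pad_le n; lia.
Qed.

End GrowthRate.

Theorem corollary5p3 (R : realType) (k : nat) (hk : (2 <= k)%N) :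
  growth_rate R (conj_sph k) = growth_rate R (sph k).
Proof.
apply/eqP; rewrite eq_le; apply/andP; split.
  by apply: le_growth_rate => n; apply: conj_sph_le_sph.
apply: (growth_rate_le_sum R _ (sph_le_conj_sph_sum hk)).
exact: conj_sph_gt0 (ltnW hk).
Qed.
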